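(* The automorphism group $\Gamma(C)$ of the cyclic order relation $C$ on $\mathbb Q\times\mathbb Z$ consists exactly of the positive permutations belonging to $\Gamma(S)$, i.e. of all positive permutations of $\mathbb Q\times\mathbb Z$ that initiate a permutation of $\mathbb Q$ of rotation type.
   Context: $\mathbb Q\times\mathbb Z$ denotes the set $\mathbb Q\times\mathbb Z$ with the lexicographic order: $(r,z)<(r',z')$ iff $r<r'$, or $r=r'$ and $z<z'$. On $\mathbb Q\times\mathbb Z$: $C(a,b,c)\iff(a<b<c)\vee(b<c<a)\vee(c<a<b)$, $B(a,b,c)\iff(a<b<c)\vee(a>b>c)$, $S(a,b,c,d)\iff(B(a,b,c)\vee B(a,d,c))\wedge(B(b,a,d)\vee B(b,c,d))$; $\Gamma(R)$ is the group of permutations of $\mathbb Q\times\mathbb Z$ preserving $R$. A vertical is a set $\{r\}\times\mathbb Z$. A permutation $g$ is systemic if it maps every vertical onto a vertical; it initiates the permutation $h$ of $\mathbb Q$ with $g(\{a\}\times\mathbb Z)=\{h(a)\}\times\mathbb Z$. A systemic permutation is positive if it preserves the order on each vertical. A section of $\mathbb Q$ is a pair $\{I_1,I_2\}$ with $I_1\cup I_2=\mathbb Q$, $I_1\cap I_2=\emptyset$, and $a<b$ for all $a\in I_1,b\in I_2$ (one of them may be empty). A permutation $h$ of $\mathbb Q$ is of rotation type if for some section $\{I_1,I_2\}$, $h$ is increasing on $I_1$ and on $I_2$ and $h(a)>h(b)$ for all $a\in I_1$, $b\in I_2$. *)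

From mathcomp Require Import all_boot all_order all_algebra.
Set Implicit Arguments. Unset Strict Implicit. Unset Printing Implicit Defensive.
Import Order.TTheory GRing.Theory Num.Theory.
Local Open Scope ring_scope.

Definition QZ := (rat * int)%type.

Definition ltQZ (x y : QZ) : Prop :=
  (x.1 < y.1) \/ (x.1 = y.1 /\ x.2 < y.2).

Definition Crel (a b c : QZ) : Prop :=
  (ltQZ a b /\ ltQZ b c) \/ (ltQZ b c /\ ltQZ c a) \/ (ltQZ c a /\ ltQZ a b).

Definition Brel (a b c : QZ) : Prop :=
  (ltQZ a b /\ ltQZ b c) \/ (ltQZ b a /\ ltQZ c b).

Definition Srel (a b c d : QZ) : Prop :=
  (Brel a b c \/ Brel a d c) /\ (Brel b a d \/ Brel b c d).

Definition preserves3 (R : QZ -> QZ -> QZ -> Prop) (g : QZ -> QZ) : Prop :=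
  forall a b c, R a b c <-> R (g a) (g b) (g c).

Definition preserves4 (R : QZ -> QZ -> QZ -> QZ -> Prop) (g : QZ -> QZ) : Prop :=
  forall a b c d, R a b c d <-> R (g a) (g b) (g c) (g d).

Definition maps_vertical_onto (g : QZ -> QZ) (a r : rat) : Prop :=
  (forall z : int, (g (a, z)).1 = r) /\
  (forall p : QZ, p.1 = r -> exists z : int, g (a, z) = p).

Definition systemic (g : QZ -> QZ) : Prop :=
  forall a : rat, exists r : rat, maps_vertical_onto g a r.

Definition initiates (g : QZ -> QZ) (h : rat -> rat) : Prop :=
  forall a : rat, maps_vertical_onto g a (h a).

Definition positive_perm (g : QZ -> QZ) : Prop :=
  systemic g /\
  forall (a : rat) (z z' : int), z < z' -> (g (a, z)).2 < (g (a, z')).2.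

(* section {I1, I2} of Q, with I2 the complement of I1 *)
Definition is_section (I1 : rat -> Prop) : Prop :=
  forall a b : rat, I1 a -> ~ I1 b -> a < b.

Definition rotation_type (h : rat -> rat) : Prop :=
  exists I1 : rat -> Prop,
    is_section I1 /\
    (forall a b, I1 a -> I1 b -> a < b -> h a < h b) /\
    (forall a b, ~ I1 a -> ~ I1 b -> a < b -> h a < h b) /\
    (forall a b, I1 a -> ~ I1 b -> h b < h a).

From mathcomp Require Import all_boot all_order all_algebra.
From mathcomp Require Import zify.
From Stdlib Require Import Classical.
Import Order.TTheory GRing.Theory Num.Theory.
Set Implicit Arguments.
Unset Strict Implicit.
Local Open Scope ring_scope.

(* A C-automorphism g of Q x Z must send the immediate successor (a, z+1) of
   each point to the successor of its image, since the successor s of x is the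
   only point with C(x, s, y) for all other y.  Hence g moves every vertical
   rigidly onto a vertical, and the initiated permutation h of Q preserves the
   cyclic order of Q; the points after which h has a descent then form the
   lower half of a section witnessing that h is of rotation type.  Conversely,
   moving the down-set over the lower half behind its complement does not
   change C, and a positive g initiating such an h is an order isomorphism from
   this rotated order onto the lexicographic one.  Finally C determines S, and
   S(s, x, z, y) agrees with C(x, y, z) whenever s is the successor of x, so a
   positive S-automorphism preserves C. *)

Record strict_total {T : Type} (lt : T -> T -> Prop) : Prop := StrictTotal {
  slt_irr : forall x, ~ lt x x;
  slt_trans : forall x y z, lt x y -> lt y z -> lt x z;
  slt_total : forall x y, x = y \/ lt x y \/ lt y x }.

(* For [lt := ltQZ], [cyc], [betw] and [sep] unfold to [Crel], [Brel] and [Srel]. *)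
Section CyclicOrder.
Context {T : Type} (lt : T -> T -> Prop).

Definition cyc (a b c : T) : Prop :=
  (lt a b /\ lt b c) \/ (lt b c /\ lt c a) \/ (lt c a /\ lt a b).

Definition betw (a b c : T) : Prop := (lt a b /\ lt b c) \/ (lt b a /\ lt c b).

Definition sep (a b c d : T) : Prop :=
  (betw a b c \/ betw a d c) /\ (betw b a d \/ betw b c d).

Definition covers (x s : T) : Prop := lt x s /\ forall w, lt x w -> lt w s -> False.

(* [lt] with the down-set [P] moved behind its complement. *)
Definition ltRot (P : T -> Prop) (x y : T) : Prop :=
  (~ P x /\ P y) \/ ((P x <-> P y) /\ lt x y).

End CyclicOrder.

(* Closes goals about [cyc], [betw] and [sep] among points whose mutual order
   is fixed by the hypotheses: saturate under transitivity, record the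
   resulting non-comparisons and disequalities, and finish propositionally. *)
Ltac order_tauto Hlt :=
  lazymatch type of Hlt with strict_total ?lt =>
  let irr := constr:(@slt_irr _ lt Hlt) in
  let tr := constr:(@slt_trans _ lt Hlt) in
  unfold cyc, sep, betw in *;
  repeat match goal with H : _ /\ _ |- _ => destruct H | H : _ \/ _ |- _ => destruct H end;
  repeat match goal with
  | H1 : lt ?a ?b, H2 : lt ?b ?c |- _ =>
      lazymatch goal with
      | _ : lt a c |- _ => fail
      | _ => pose proof (tr _ _ _ H1 H2)
      end
  end;
  try match goal with H : lt ?a ?a |- _ => exfalso; exact: irr _ H end;
  repeat match goal with
  | H : lt ?a ?b |- _ =>
      lazymatch goal with
      | _ : ~ lt b a |- _ => fail
      | _ =>
        assert (~ lt b a) by (move/(tr _ _ _ H); exact: irr);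
        assert (a <> b) by (let K := fresh in intro K; move: H; rewrite K; exact: irr);
        assert (b <> a) by (let K := fresh in intro K; move: H; rewrite K; exact: irr)
      end
  end;
  repeat match goal with
  | x : _ |- _ =>
      lazymatch goal with
      | _ : ~ lt x x |- _ => fail
      | _ => pose proof (irr x)
      end
  end; tauto
  end.

Ltac order_cases Hlt T :=
  repeat match goal with
  | x : T, y : T |- _ =>
      lazymatch goal with
      | _ : _ x y |- _ => fail
      | _ : _ y x |- _ => fail
      | _ => destruct (@slt_total _ _ Hlt x y) as [<-|[?|?]]
      end
  end.

Section StrictTotalOrder.
Context {T : Type} (lt : T -> T -> Prop).
Hypothesis Hlt : strict_total lt.

Lemma cyc_asym a b c : cyc lt a b c -> cyc lt a c b -> False.
Proof. by move=> H1 H2; order_tauto Hlt. Qed.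

Lemma cyc_neq a b c : cyc lt a b c -> [/\ a <> b, b <> c & a <> c].
Proof. by move=> H; split=> E; subst; order_tauto Hlt. Qed.

Lemma sepE a b c d :
  sep lt a b c d <-> (cyc lt a b c /\ cyc lt c d a) \/ (cyc lt a d c /\ cyc lt c b a).
Proof. by order_cases Hlt T; order_tauto Hlt. Qed.

Lemma sep_cyc_iff (f : T -> T) :
  (forall a b c, cyc lt a b c <-> cyc lt (f a) (f b) (f c)) ->
  forall a b c d, sep lt a b c d <-> sep lt (f a) (f b) (f c) (f d).
Proof.
move=> fC a b c d.
by rewrite !sepE (fC a b c) (fC c d a) (fC a d c) (fC c b a).
Qed.

Lemma cyc_covers x s y : covers lt x s -> (cyc lt x s y <-> y <> x /\ y <> s).
Proof. by move=> [Hxs Hc]; have := Hc y; order_cases Hlt T; order_tauto Hlt. Qed.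

Lemma covers_ncyc x s y : covers lt x s -> ~ cyc lt x y s.
Proof.
move=> Hxs Hy; have [Hxy Hys _] := cyc_neq Hy.
by apply: (cyc_asym Hy); apply/(cyc_covers _ Hxs); split=> // E; apply: Hxy.
Qed.

Lemma sep_covers x s y z : covers lt x s -> y <> s -> z <> s ->
  (cyc lt x y z <-> sep lt s x z y).
Proof.
move=> [Hxs Hc]; have := Hc y; have := Hc z.
by order_cases Hlt T; order_tauto Hlt.
Qed.

Lemma ltRot_strict_total (P : T -> Prop) : strict_total (ltRot lt P).
Proof.
have [irr tr tot] := Hlt; rewrite /ltRot; split.
- by move=> x; have := irr x; tauto.
- move=> x y z; have := tr x y z; tauto.
- move=> x y; case: (classic (P x)); case: (classic (P y)); have := tot x y; tauto.
Qed.

Lemma cyc_ltRot (P : T -> Prop) (P_down : forall x y, lt x y -> P y -> P x) a b c :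
  cyc lt a b c <-> cyc (ltRot lt P) a b c.
Proof.
rewrite /ltRot; order_cases Hlt T;
repeat match goal with x : T |- _ =>
  lazymatch goal with
  | _ : P x |- _ => fail
  | _ : ~ P x |- _ => fail
  | _ => case: (classic (P x)) => ?
  end end;
try (match goal with H : lt ?x ?y, HP : P ?y, HN : ~ P ?x |- _ =>
       by case: HN; exact: P_down H HP end);
order_tauto Hlt.
Qed.
End StrictTotalOrder.

Lemma cyc_homo {T U} (lt1 : T -> T -> Prop) (lt2 : U -> U -> Prop) (f : T -> U) a b c :
  {homo f : x y / lt1 x y >-> lt2 x y} -> cyc lt1 a b c -> cyc lt2 (f a) (f b) (f c).
Proof.
by move=> fH [[? ?]|[[? ?]|[? ?]]]; [left|right; left|right; right]; split; apply: fH.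
Qed.

Lemma cyc_homo_iff {T U} (lt1 : T -> T -> Prop) (lt2 : U -> U -> Prop) (f : T -> U) :
  strict_total lt1 -> strict_total lt2 -> {homo f : x y / lt1 x y >-> lt2 x y} ->
  forall a b c, cyc lt1 a b c <-> cyc lt2 (f a) (f b) (f c).
Proof.
move=> [_ _ tot1] [irr2 tr2 _] fH a b c; split; first exact: cyc_homo.
apply: (cyc_homo (lt1 := fun x y => lt2 (f x) (f y))) => x y Hxy.
case: (tot1 x y) => [E|[//|Hyx]]; first by move: Hxy; rewrite E => /irr2.
by case: (irr2 _ (tr2 _ _ _ Hxy (fH _ _ Hyx))).
Qed.

Section CycPreservingMaps.
Context {T : Type} (lt : T -> T -> Prop) (Hlt : strict_total lt) (f : T -> T).

Lemma cyc_perm_covers (fK : bijective f)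
    (fC : forall a b c, cyc lt a b c <-> cyc lt (f a) (f b) (f c)) x s t :
  covers lt x s -> covers lt (f x) t -> f s = t.
Proof.
move=> Hxs Hxt; have [f' fK' f'K] := fK; apply: NNPP => Hst.
have Htx : t <> f x by move=> E; case: Hxt; rewrite E => /(slt_irr Hlt).
have Hsx : s <> x by move=> E; case: Hxs; rewrite E => /(slt_irr Hlt).
have H1 : cyc lt (f x) (f s) t.
  rewrite -[t]f'K -fC; apply/(cyc_covers Hlt _ Hxs); split.
  - by move=> E; apply: Htx; rewrite -E f'K.
  - by move=> E; apply: Hst; rewrite -E f'K.
have H2 : cyc lt (f x) t (f s).
  by apply/(cyc_covers Hlt _ Hxt); split=> // /(can_inj fK').
exact: (cyc_asym Hlt H1 H2).
Qed.

Lemma cyc_of_sep_covers (f_inj : injective f)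
    (fS : forall a b c d, sep lt a b c d <-> sep lt (f a) (f b) (f c) (f d)) x s :
  covers lt x s -> covers lt (f x) (f s) ->
  forall y z, cyc lt x y z <-> cyc lt (f x) (f y) (f z).
Proof.
move=> Hxs Hfxs y z.
have [-> | Hys] := classic (y = s).
  rewrite (cyc_covers Hlt _ Hxs) (cyc_covers Hlt _ Hfxs).
  split=> -[Hzx Hzs].
  - by split=> /f_inj.
  - by split=> E; [apply: Hzx | apply: Hzs]; rewrite E.
have [-> | Hzs] := classic (z = s).
  by split=> H; [case: (covers_ncyc Hlt Hxs H) | case: (covers_ncyc Hlt Hfxs H)].
have Hfys : f y <> f s by move/f_inj.
have Hfzs : f z <> f s by move/f_inj.
by rewrite (sep_covers Hlt Hxs Hys Hzs) (sep_covers Hlt Hfxs Hfys Hfzs).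
Qed.

End CycPreservingMaps.

Section CycPreservingRotation.
Context {T : Type} (lt : T -> T -> Prop) (Hlt : strict_total lt) (f : T -> T).
Hypotheses (f_inj : injective f)
  (fC : forall a b c, cyc lt a b c -> cyc lt (f a) (f b) (f c)).

(* The points after which [f] has a descent: the lower half of the section
   exhibiting [f] as a rotation. *)
Definition before_descent (a : T) : Prop := exists b, lt a b /\ lt (f b) (f a).

Lemma before_descent_down a b : before_descent a -> lt b a -> before_descent b.
Proof.
move=> [w [Haw Hw]] Hba; exists w; split; first exact: slt_trans Hlt _ _ _ Hba Haw.
have : cyc lt b a w by left.
by move/fC => H; order_tauto Hlt.
Qed.

Lemma before_descent_section a b : before_descent a -> ~ before_descent b -> lt a b.
Proof.
move=> Ha Hb; case: (slt_total Hlt a b) => [E|[//|Hba]]; first by subst.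
by case: Hb; exact: before_descent_down Ha Hba.
Qed.

Lemma before_descent_homo a b : before_descent b -> lt a b -> lt (f a) (f b).
Proof.
move=> [w [Hbw Hw]] Hab; have : cyc lt a b w by left.
by move/fC => H; order_tauto Hlt.
Qed.

Lemma after_descent_homo a b : ~ before_descent a -> lt a b -> lt (f a) (f b).
Proof.
move=> Ha Hab; case: (slt_total Hlt (f a) (f b)) => [E|[//|H]].
- by move/f_inj: E => E; subst; case: (slt_irr Hlt Hab).
- by case: Ha; exists b.
Qed.

Lemma before_descent_cross a b : before_descent a -> ~ before_descent b -> lt (f b) (f a).
Proof.
move=> Ha Hb; have Hab := before_descent_section Ha Hb.
have [w [Haw Hw]] := Ha.
case: (slt_total Hlt w b) => [E|[Hwb|Hbw]]; first by subst.
- have : cyc lt a w b by left.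
  by move/fC => H; order_tauto Hlt.
- have Hfwb : ~ lt (f w) (f b) by move=> H; apply: Hb; exists w.
  have : cyc lt a b w by left.
  by move/fC => H; order_tauto Hlt.
Qed.

End CycPreservingRotation.

Lemma ltQZ_strict_total : strict_total ltQZ.
Proof.
split.
- by move=> [a z] [/=|[_ /=]]; rewrite ltxx.
- move=> [a i] [b j] [c k]; rewrite /ltQZ /= => [[H1|[E1 H1]] [H2|[E2 H2]]]; subst.
  + by left; exact: lt_trans H1 H2.
  + by left.
  + by left.
  + by right; split; [|exact: lt_trans H1 H2].
- move=> [a i] [b j]; rewrite /ltQZ /=; case: (ltgtP a b) => Hab.
  + by right; left; left.
  + by right; right; left.
  + subst; case: (ltgtP i j) => Hij; [right; left | right; right | left] => //.
    * by right.
    * by right.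
    * by subst.
Qed.

Definition ltrat (a b : rat) : Prop := a < b.

Lemma ltrat_strict_total : strict_total ltrat.
Proof.
split; rewrite /ltrat.
- by move=> x; rewrite ltxx.
- by move=> x y z; exact: lt_trans.
- by move=> x y; case: (ltgtP x y) => H; [right; left | right; right | left].
Qed.

Definition succ (x : QZ) : QZ := (x.1, x.2 + 1).

Lemma covers_succ x : covers ltQZ x (succ x).
Proof.
case: x => [a i]; rewrite /covers /succ /ltQZ /=; split; first by right; split=> //; lia.
move=> [b j] /= [H1|[E1 H1]] [H2|[E2 H2]]; subst.
- by have := lt_trans H1 H2; rewrite ltxx.
- by rewrite ltxx in H1.
- by rewrite ltxx in H2.
- lia.
Qed.

Lemma succ_shift (g : QZ -> QZ) : (forall x, g (succ x) = succ (g x)) ->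
  forall a k, g (a, k) = ((g (a, 0)).1, (g (a, 0)).2 + k).
Proof.
move=> gS a; elim/int_ind => [|n IH|n IH]; first by rewrite addr0 -surjective_pairing.
- have -> : (a, n.+1%:Z) = succ (a, n%:Z) by rewrite /succ /=; congr (_, _); lia.
  by rewrite gS IH /succ /=; congr (_, _); lia.
- have := gS (a, - n.+1%:Z); rewrite /succ /=.
  have -> : - n.+1%:Z + 1 = - n%:Z by lia.
  rewrite IH; case: (g (a, - n.+1%:Z)) => p q [<- E]; congr (_, _); lia.
Qed.

Lemma positive_succ (g : QZ -> QZ) : positive_perm g -> forall x, g (succ x) = succ (g x).
Proof.
move=> [gsys gincr] [a z]; have [r [Hr Honto]] := gsys a.
pose v z := (g (a, z)).2.
have Hv : v (z + 1) = v z + 1.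
  have [w Hw] := Honto (r, v z + 1) erefl.
  have Hvw : v w = v z + 1 by rewrite /v Hw.
  have Hz : v z < v (z + 1) by apply: gincr; lia.
  case: (ltgtP w (z + 1)) => [Hw1|Hw1|<- //].
  - case: (ltgtP w z) => [Hwz|Hwz|Hwz]; last by move: Hvw; rewrite Hwz; lia.
    + by have := gincr a w z Hwz; rewrite -/(v w) -/(v z); lia.
    + lia.
  - by have := gincr a (z + 1) w Hw1; rewrite -/(v w) -/(v (z + 1)); lia.
rewrite /succ /= [LHS]surjective_pairing; congr (_, _); first by rewrite !Hr.
exact: Hv.
Qed.

Lemma cyc_perm_succ (g : QZ -> QZ) : bijective g -> preserves3 Crel g ->
  forall x, g (succ x) = succ (g x).
Proof.
by move=> gb gC x; apply: (cyc_perm_covers ltQZ_strict_total gb gC); apply: covers_succ.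
Qed.

Lemma succ_commuting_positive (g : QZ -> QZ) : bijective g ->
  (forall x, g (succ x) = succ (g x)) ->
  positive_perm g /\ exists h, bijective h /\ initiates g h.
Proof.
move=> [g' gK g'K] gS; have gE := succ_shift gS.
pose h a := (g (a, 0)).1.
have gh : initiates g h.
  move=> a; split=> [z|[r z] /= ->]; first by rewrite gE.
  by exists (z - (g (a, 0)).2); rewrite gE addrC subrK.
split.
  split=> [a|a z z' Hzz']; first by exists (h a).
  by rewrite (gE a z) (gE a z') /= ltrD2l.
exists h; split=> //; exists (fun r => (g' (r, 0)).1) => [a|r] /=.
- have <- : g (a, - (g (a, 0)).2) = (h a, 0) by rewrite gE subrr.
  by rewrite gK.
- by have := g'K (r, 0); case: (g' (r, 0)) => b k; rewrite gE => -[].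
Qed.

Lemma cyc_fst (p q r : QZ) : p.1 <> q.1 -> q.1 <> r.1 -> r.1 <> p.1 ->
  cyc ltQZ p q r -> cyc ltrat p.1 q.1 r.1.
Proof.
have lt_fst (u v : QZ) : u.1 <> v.1 -> ltQZ u v -> ltrat u.1 v.1 by move=> ? [// | []].
move=> Hpq Hqr Hrp [[? ?]|[[? ?]|[? ?]]]; [left|right; left|right; right].
all: by split; apply: lt_fst.
Qed.

Lemma initiated_cyc (g : QZ -> QZ) (h : rat -> rat) : preserves3 Crel g -> initiates g h ->
  injective h -> forall a b c, cyc ltrat a b c -> cyc ltrat (h a) (h b) (h c).
Proof.
move=> gC gh h_inj a b c Habc; have [Hab Hbc Hac] := cyc_neq ltrat_strict_total Habc.
have gh0 x : (g (x, 0)).1 = h x := (gh x).1 0.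
rewrite -!gh0; apply: cyc_fst; rewrite ?gh0.
- by move/h_inj.
- by move/h_inj.
- by move/h_inj/esym.
have H0 : cyc ltQZ (a, 0) (b, 0) (c, 0).
  by apply: (cyc_homo (lt2 := ltQZ) (f := fun x => (x, 0%R))) Habc => x y Hxy; left.
exact: (gC _ _ _).1 H0.
Qed.

Lemma cyc_positive_rotation (g : QZ -> QZ) : bijective g -> preserves3 Crel g ->
  positive_perm g /\ exists h, bijective h /\ initiates g h /\ rotation_type h.
Proof.
move=> gb gC; have [gP [h [hb gh]]] := succ_commuting_positive gb (cyc_perm_succ gb gC).
split=> //; exists h; do 2!split=> //.
have h_inj : injective h by apply: bij_inj.
have hC := initiated_cyc gC gh h_inj.
exists (before_descent ltrat h); do !split.
- exact: (before_descent_section ltrat_strict_total hC).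
- by move=> a b _; exact: (before_descent_homo ltrat_strict_total hC).
- by move=> a b Ha _; exact: (after_descent_homo ltrat_strict_total h_inj Ha).
- exact: (before_descent_cross ltrat_strict_total hC).
Qed.

Lemma rotation_positive_cyc (g : QZ -> QZ) (h : rat -> rat) :
  positive_perm g -> initiates g h -> rotation_type h -> preserves3 Crel g.
Proof.
move=> [_ gincr] gh [I [Isec [Iincr [nIincr Icross]]]].
have gh1 x z : (g (x, z)).1 = h x := (gh x).1 z.
pose P (x : QZ) := I x.1.
have P_down x y : ltQZ x y -> P y -> P x.
  case: x y => [a i] [b j]; rewrite /P /ltQZ /= => -[Hab|[-> _]] Ib //.
  by apply: NNPP => Ia; have := Isec b a Ib Ia; rewrite ltNge le_eqVlt Hab orbT.
have g_homo : {homo g : x y / ltRot ltQZ P x y >-> ltQZ x y}.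
  move=> [a i] [b j]; rewrite /ltRot /P /ltQZ /= !gh1.
  case=> [[Ia Ib]|[IE [Hab|[Eab Hij]]]].
  - by left; apply: Icross.
  - left; case: (classic (I a)) => Ia.
    + by apply: Iincr => //; apply/IE.
    + by apply: nIincr => // /IE.
  - by subst; right; split=> //; apply: gincr.
move=> a b c; change (cyc ltQZ a b c <-> cyc ltQZ (g a) (g b) (g c)).
rewrite (cyc_ltRot ltQZ_strict_total P_down).
exact: (cyc_homo_iff (ltRot_strict_total ltQZ_strict_total P) ltQZ_strict_total g_homo).
Qed.

Lemma positive_sep_cyc (g : QZ -> QZ) :
  bijective g -> positive_perm g -> preserves4 Srel g -> preserves3 Crel g.
Proof.
move=> gb gP gS a.
apply: (cyc_of_sep_covers ltQZ_strict_total (bij_inj gb) gS (covers_succ a)).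
by rewrite (positive_succ gP); apply: covers_succ.
Qed.

Theorem mainTheorem12 (g : QZ -> QZ) (g_perm : bijective g) :
  (preserves3 Crel g <-> positive_perm g /\ preserves4 Srel g) /\
  (preserves3 Crel g <->
     positive_perm g /\
     exists h : rat -> rat, bijective h /\ initiates g h /\ rotation_type h).
Proof.
split; split.
- move=> gC; split; first by case: (cyc_positive_rotation g_perm gC).
  exact: (sep_cyc_iff ltQZ_strict_total gC).
- by case=> gP gS; exact: positive_sep_cyc.
- exact: cyc_positive_rotation.
- by case=> gP [h [_ [gh hR]]]; exact: rotation_positive_cyc gh hR.
Qed.
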